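(* Let $n\ge0$, $H\ge0$ and $0\le i\le n$ be integers, and put $R_4(\varepsilon)=\binom{n+i+\varepsilon}{n}\binom{2n-i-\varepsilon}{n}$. Then $\tilde\Phi_n^{-1}d_n^{H}\frac1{H!}\frac{\partial^H}{\partial\varepsilon^H}R_4(\varepsilon)\big|_{\varepsilon=0}$ is an integer, where $\tilde\Phi_n=\prod_{p\text{ prime},\ p<n,\ \{n/p\}\in[2/3,1)}p$.
   Context: For complex $x$ and integer $m\ge0$, $\binom xm=x(x-1)\cdots(x-m+1)/m!$. $d_n=\operatorname{lcm}(1,\dots,n)$, $d_0=1$; $\{x\}$ is the fractional part of $x$; an empty product equals $1$. *)

From HB Require Import structures.
From mathcomp Require Import all_boot all_order all_algebra.
Set Implicit Arguments. Unset Strict Implicit. Unset Printing Implicit Defensive.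
Import Order.TTheory GRing.Theory Num.Theory.
Local Open Scope ring_scope.

Definition binpoly (x : {poly rat}) (m : nat) : {poly rat} :=
  (\prod_(j < m) (x - (j%:R)%:P)) * ((m`!%:R)^-1)%:P.

Definition R4 (n i : nat) : {poly rat} :=
  binpoly (((n + i)%N%:R)%:P + 'X) n * binpoly (((2 * n - i)%N%:R)%:P - 'X) n.

Definition dlcm (n : nat) : nat := \big[lcmn/1%N]_(1 <= k < n.+1) k.

Definition fracq (x : rat) : rat := x - (Num.floor x)%:~R.

Definition PhiT (n : nat) : nat :=
  \prod_(p < n | prime p && ((2%:R / 3%:R <= fracq (n%:R / p%:R)) && (fracq (n%:R / p%:R) < 1)))
    p.

(* Substituting eps = d_n X turns n!^2 R_4(eps) into the integer polynomial
   prod_(j < n) (i+n-j + d_n X) * prod_(j < n) (2n-i-j - d_n X), whose coefficient of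
   X^H is n!^2 d_n^H R_4^(H)(0) / H!.  By Gauss's lemma its content is divisible by
   prod_j gcd(i+n-j, d_n) * prod_j gcd(2n-i-j, d_n), and a p-adic count shows that
   n!^2 Phi_n divides this product: every p^k <= n divides d_n, so the p-adic valuation of
   prod_j gcd(a+n-j, d_n) is at least the number of pairs (k, j) with p^k <= n and
   p^k | a+n-j, i.e. sum_k (floor((a+n)/p^k) - floor(a/p^k)) = sum_k floor(n/p^k) + carries.
   Without carries this is Legendre's formula for n!; when {n/p} >= 2/3, the residues of
   i and n-i modulo p, whose sum is congruent to n, force a carry at k = 1 in one of the two
   blocks, and that carry pays for the factor p of Phi_n. *)

From Pilot Require Import Defs.
From mathcomp Require Import all_boot all_order all_algebra.
From mathcomp Require Import zify.
Import Order.TTheory GRing.Theory Num.Theory.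

Lemma logn_prod (I : Type) (r : seq I) (P : pred I) (F : I -> nat) p :
  (forall i, P i -> 0 < F i) ->
  logn p (\prod_(i <- r | P i) F i) = \sum_(i <- r | P i) logn p (F i).
Proof.
move=> F_gt0; suff [] : 0 < \prod_(i <- r | P i) F i /\
    logn p (\prod_(i <- r | P i) F i) = \sum_(i <- r | P i) logn p (F i) by [].
apply: (big_rec2 (fun x y => 0 < x /\ logn p x = y)); first by rewrite logn1.
by move=> i x y Pi [x_gt0 <-]; rewrite lognM ?muln_gt0 ?F_gt0.
Qed.

Lemma logn_leq_dvdn m n : 0 < m -> 0 < n ->
  (forall p, prime p -> logn p m <= logn p n) -> m %| n.
Proof.
move=> m_gt0 n_gt0 le_mn; apply/dvdn_partP => // p.
by rewrite mem_primes p_part => /and3P[p_pr _ _]; rewrite pfactor_dvdn ?le_mn.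
Qed.

Lemma sum_dvdn_window d a m : 0 < d ->
  \sum_(j < m) (d %| a + m - j) = (a + m) %/ d - a %/ d.
Proof.
move=> d_gt0; elim: m => [|m IHm]; first by rewrite big_ord0 addn0 subnn.
rewrite big_ord_recl subn0 addnS divnS //.
under eq_bigr => j _ do rewrite lift0 /= subSS.
by rewrite IHm addnBA // leq_div2r // leq_addr.
Qed.

Lemma sum_bool_leq_bound (P : pred nat) N m : (forall k, P k -> k <= m) ->
  \sum_(1 <= k < N.+1) P k <= m.
Proof.
move=> le_Pm; apply: leq_trans (geq_minr N m).
elim: N => [|N IHN]; first by rewrite big_geq.
by rewrite big_nat_recr //=; case: (boolP (P N.+1)) => [/le_Pm|_] /=; lia.
Qed.

Lemma sum_dvdn_leq_logn_gcdn p n c D : prime p -> 0 < c -> 0 < D ->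
  (forall k, 0 < k -> p ^ k <= n -> p ^ k %| D) ->
  \sum_(1 <= k < n.+1 | p ^ k <= n) (p ^ k %| c) <= logn p (gcdn c D).
Proof.
move=> p_pr c_gt0 D_gt0 pk_dvdD; rewrite big_mkcond.
have condE k : (if p ^ k <= n then p ^ k %| c : nat else 0) = (p ^ k <= n) && (p ^ k %| c).
  by case: (p ^ k <= n).
under eq_bigr => k _ do rewrite condE.
apply: sum_bool_leq_bound => k /andP[pk_le pk_dvdc].
rewrite -pfactor_dvdn ?gcdn_gt0 ?c_gt0 // dvdn_gcd pk_dvdc.
by case: k pk_le {pk_dvdc} => [|k] pk_le; [rewrite dvd1n | apply: pk_dvdD].
Qed.

Lemma sum_window_leq_logn_prod_gcdn a {p n D} : prime p -> 0 < D ->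
  (forall k, 0 < k -> p ^ k <= n -> p ^ k %| D) ->
  \sum_(1 <= k < n.+1 | p ^ k <= n) ((a + n) %/ p ^ k - a %/ p ^ k)
    <= logn p (\prod_(j < n) gcdn (a + n - j) D).
Proof.
move=> p_pr D_gt0 pk_dvdD.
rewrite logn_prod => [|j _]; last by rewrite gcdn_gt0 D_gt0 orbT.
under eq_bigr => k _ do rewrite -sum_dvdn_window ?expn_gt0 ?prime_gt0 //.
rewrite exchange_big /=; apply: leq_sum => j _.
by apply: sum_dvdn_leq_logn_gcdn => //; have := ltn_ord j; lia.
Qed.

Lemma carry_modn_or_compl {p n i} : 0 < p -> i <= n -> 2 * p <= 3 * (n %% p) ->
  (p <= i %% p + n %% p) || (p <= (n - i) %% p + n %% p).
Proof.
move=> p_gt0 le_in large_rem.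
have : (i %% p + (n - i) %% p) %% p = n %% p by rewrite modnDm subnKC.
have := ltn_pmod i p_gt0; have := ltn_pmod (n - i) p_gt0.
move: (i %% p) ((n - i) %% p) large_rem => y z large_rem y_lt z_lt.
case: (ltnP (y + z) p) => [yz_lt | yz_ge]; first by rewrite modn_small //; lia.
by rewrite -{1}(subnK yz_ge) modnDr modn_small; lia.
Qed.

Lemma dlcm_gt0 n : 0 < dlcm n.
Proof.
rewrite /dlcm big_seq; elim/big_ind: _ => // [x y x_gt0 y_gt0 | k].
  by rewrite lcmn_gt0 x_gt0.
by rewrite mem_index_iota => /andP[].
Qed.

Lemma dvdn_dlcm n m : 0 < m -> m <= n -> m %| dlcm n.
Proof.
by move=> m_gt0 le_mn; rewrite /dlcm (big_rem m) ?mem_index_iota ?m_gt0 //= dvdn_lcml.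
Qed.

Section PhiT.
Local Open Scope ring_scope.

Lemma fracq_divn n q : (0 < q)%N -> Defs.fracq (n%:R / q%:R) = (n %% q)%:R / q%:R.
Proof.
move=> q_gt0; have q_neq0 : (q%:R : rat) != 0 by rewrite pnatr_eq0 -lt0n.
have nqE : (n%:R / q%:R : rat) = (n %/ q)%:R + (n %% q)%:R / q%:R.
  by rewrite {1}(divn_eq n q) natrD natrM mulrDl mulfK.
rewrite /Defs.fracq (@floor_def _ _ (n %/ q)%:Z).
  by rewrite nqE pmulrn addrAC subrr add0r.
rewrite nqE pmulrn lerDl divr_ge0 ?ler0n //= intrD pmulrn ltrD2l.
by rewrite ltr_pdivrMr ?ltr0n // mul1r ltr_nat ltn_pmod.
Qed.

Lemma PhiTE n : PhiT n = (\prod_(q < n | prime q && (2 * q <= 3 * (n %% q))) q)%N.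
Proof.
apply: eq_bigl => q; case: (boolP (prime q)) => //= q_pr.
have q_gt0 : (0 < q)%N by exact: prime_gt0.
rewrite fracq_divn // ltr_pdivrMr ?ltr0n // mul1r ltr_nat ltn_pmod // andbT.
rewrite ler_pdivrMr ?ltr0n // mulrAC ler_pdivlMr ?ltr0n //.
by rewrite -!natrM ler_nat mulnC [(3 * _)%N]mulnC.
Qed.

End PhiT.

Lemma PhiT_gt0 n : 0 < PhiT n.
Proof. by rewrite PhiTE prodn_cond_gt0 // => q /andP[/prime_gt0]. Qed.

Lemma logn_PhiT p n : prime p ->
  logn p (PhiT n) = (p < n) && (2 * p <= 3 * (n %% p)).
Proof.
move=> p_pr; rewrite PhiTE logn_prod => [|q /andP[q_pr _]]; last exact: prime_gt0.
under eq_bigr => q /andP[q_pr _] do rewrite logn_prime //.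
case: (ltnP p n) => [lt_pn | le_np] /=; last first.
  by rewrite big1 // => q _; rewrite gtn_eqF // (leq_trans (ltn_ord q) le_np).
rewrite big_mkcond (bigD1 (Ordinal lt_pn)) //= eqxx p_pr big1 ?addn0 => [|q neq_qp].
  by case: (2 * p <= 3 * (n %% p)).
case: ifP => // _; apply/eqP; rewrite eqb0; apply: contra neq_qp => /eqP pq.
by apply/eqP/val_inj.
Qed.

Lemma divnD_subl a n q : 0 < q ->
  (a + n) %/ q - a %/ q = n %/ q + (q <= a %% q + n %% q).
Proof. by move=> q_gt0; rewrite divnD // -addnA addKn. Qed.

Lemma logn_fact_cond p n : prime p ->
  logn p n`! = \sum_(1 <= k < n.+1 | p ^ k <= n) n %/ p ^ k.
Proof.
move=> p_pr; rewrite logn_fact // [RHS]big_mkcond /=; apply: eq_bigr => k _.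
by case: leqP => // lt_n_pk; rewrite divn_small.
Qed.

Lemma PhiT_cond_leq_sum_carry {p n i} : prime p -> i <= n ->
  (p < n) && (2 * p <= 3 * (n %% p)) <=
  \sum_(1 <= k < n.+1 | p ^ k <= n)
     ((p ^ k <= i %% p ^ k + n %% p ^ k) + (p ^ k <= (n - i) %% p ^ k + n %% p ^ k)).
Proof.
move=> p_pr le_in; case: (boolP (_ && _)) => // /andP[lt_pn large_rem].
rewrite big_ltn_cond; last lia.
rewrite expn1 (ltnW lt_pn) /=.
by case/orP: (carry_modn_or_compl (prime_gt0 p_pr) le_in large_rem) => ->; lia.
Qed.

Lemma logn_fact2_PhiT_leq_sum_window {p n i} : prime p -> i <= n ->
  2 * logn p n`! + logn p (PhiT n) <=
  \sum_(1 <= k < n.+1 | p ^ k <= n) ((i + n) %/ p ^ k - i %/ p ^ k) +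
  \sum_(1 <= k < n.+1 | p ^ k <= n) ((n - i + n) %/ p ^ k - (n - i) %/ p ^ k).
Proof.
move=> p_pr le_in; have pk_gt0 k : 0 < p ^ k by rewrite expn_gt0 prime_gt0.
have windowE a :
    \sum_(1 <= k < n.+1 | p ^ k <= n) ((a + n) %/ p ^ k - a %/ p ^ k) =
    \sum_(1 <= k < n.+1 | p ^ k <= n) n %/ p ^ k +
    \sum_(1 <= k < n.+1 | p ^ k <= n) (p ^ k <= a %% p ^ k + n %% p ^ k).
  by rewrite -big_split; apply: eq_bigr => k _; rewrite divnD_subl.
rewrite !windowE logn_PhiT // logn_fact_cond //.
by have := PhiT_cond_leq_sum_carry p_pr le_in; rewrite big_split /=; lia.
Qed.

Lemma fact2_PhiT_dvdn_prod_gcdn {n i} : i <= n ->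
  n`! * n`! * PhiT n %|
  (\prod_(j < n) gcdn (i + n - j) (dlcm n)) * \prod_(j < n) gcdn (n - i + n - j) (dlcm n).
Proof.
move=> le_in; have d_gt0 := dlcm_gt0 n.
have G_gt0 a : 0 < \prod_(j < n) gcdn (a + n - j) (dlcm n).
  by rewrite prodn_gt0 // => j; rewrite gcdn_gt0 d_gt0 orbT.
apply: logn_leq_dvdn => [||p p_pr]; rewrite ?muln_gt0 ?fact_gt0 ?PhiT_gt0 ?G_gt0 //.
have pk_dvd_d k : 0 < k -> p ^ k <= n -> p ^ k %| dlcm n.
  by move=> _; apply: dvdn_dlcm; rewrite expn_gt0 prime_gt0.
have := sum_window_leq_logn_prod_gcdn i p_pr d_gt0 pk_dvd_d.
have := sum_window_leq_logn_prod_gcdn (n - i) p_pr d_gt0 pk_dvd_d.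
have := logn_fact2_PhiT_leq_sum_window p_pr le_in.
rewrite !lognM ?muln_gt0 ?fact_gt0 ?PhiT_gt0 ?G_gt0 //; lia.
Qed.

Local Open Scope ring_scope.

Lemma coef_comp_scaleX (R : comNzRingType) (p : {poly R}) (c : R) k :
  (p \Po (c *: 'X))`_k = c ^+ k * p`_k.
Proof.
elim/poly_ind: p k => [|p a IHp] k; first by rewrite comp_poly0 !coef0 mulr0.
rewrite comp_poly_MXaddC -scalerAr !coefD !coefC coefZ !coefMX.
by case: k => [|k] /=; rewrite ?mulr0 ?expr0 ?add0r ?mul1r ?addr0 ?IHp ?exprS ?mulrA.
Qed.

Lemma horner0_derivn (R : nzRingType) (p : {poly R}) k : (p^`(k)).[0] = p`_k *+ k`!.
Proof. by rewrite horner_coef0 coef_derivn addn0 ffactnn. Qed.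

Lemma comp_binpoly (x q : {poly rat}) m : binpoly x m \Po q = binpoly (x \Po q) m.
Proof.
rewrite /binpoly comp_polyM comp_polyC rmorph_prod /=; congr (_ * _).
by apply: eq_bigr => j _; rewrite comp_polyB comp_polyC.
Qed.

Lemma binpoly_shift (a m : nat) (q : {poly rat}) :
  binpoly ((a + m)%:R%:P + q) m =
  (\prod_(j < m) ((a + m - j)%:R%:P + q)) * (m`!%:R^-1)%:P.
Proof.
rewrite /binpoly; congr (_ * _); apply: eq_bigr => j _.
by rewrite addrAC -polyCB -natrB // (leq_trans (ltnW (ltn_ord j))) ?leq_addl.
Qed.

Lemma R4E n i : (i <= n)%N ->
  R4 n i = binpoly ((i + n)%:R%:P + 'X) n * binpoly ((n - i + n)%:R%:P - 'X) n.
Proof. by move=> le_in; rewrite /R4 addnC (_ : (2 * n - i = n - i + n)%N) //; lia. Qed.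

Definition shifted_prod (a m : nat) (s : int) : {poly int} :=
  \prod_(j < m) ((a + m - j)%N%:Z%:P + s *: 'X).

Lemma map_shifted_prod a m s :
  map_poly intr (shifted_prod a m s) =
  \prod_(j < m) ((a + m - j)%:R%:P + s%:~R *: 'X) :> {poly rat}.
Proof.
rewrite rmorph_prod; apply: eq_bigr => j _.
by rewrite rmorphD /= map_polyC map_polyZ map_polyX /= pmulrn.
Qed.

Lemma gcdn_dvdz_zcontents_linear (c : nat) (s : int) :
  ((gcdn c `|s|)%:Z %| zcontents (c%:Z%:P + s *: 'X))%Z.
Proof.
rewrite dvdz_contents; apply/polyOverP => k.
rewrite coefD coefC coefZ coefX dvdzE.
case: k => [|[|k]] /=; rewrite ?mulr0 ?mulr1 ?addr0 ?add0r ?dvdn0 //.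
  exact: dvdn_gcdl.
exact: dvdn_gcdr.
Qed.

Lemma prod_gcdn_dvdz_zcontents a m s :
  ((\prod_(j < m) gcdn (a + m - j) `|s|)%N%:Z %| zcontents (shifted_prod a m s))%Z.
Proof.
rewrite /shifted_prod (big_morph _ zcontentsM (zcontents_monic (monic1 _))).
elim/big_ind2: _ => // [x1 x2 y1 y2 dvd1 dvd2 | j _].
  by rewrite PoszM dvdz_mul.
exact: gcdn_dvdz_zcontents_linear.
Qed.

Lemma R4_comp_scaleX n i : (i <= n)%N ->
  R4 n i \Po ((dlcm n)%:R *: 'X) =
  map_poly intr (shifted_prod i n (dlcm n) * shifted_prod (n - i) n (- (dlcm n)%:Z))
    * ((n`!%:R ^+ 2)^-1)%:P.
Proof.
move=> le_in; rewrite R4E // comp_polyM !comp_binpoly comp_polyD comp_polyB.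
rewrite !comp_polyC comp_polyX -scaleNr !binpoly_shift rmorphM /= !map_shifted_prod.
by rewrite mulrNz scaleNr mulrACA -polyCM -invfM -expr2.
Qed.

Lemma PhiT_dvd_dlcm_exp_coef_R4 n i H : (i <= n)%N ->
  exists z : int, (dlcm n)%:R ^+ H * (R4 n i)`_H = (z * (PhiT n)%:Z)%:~R :> rat.
Proof.
move=> le_in; pose Z := shifted_prod i n (dlcm n) * shifted_prod (n - i) n (- (dlcm n)%:Z).
have : ((n`! * n`! * PhiT n)%N%:Z %| zcontents Z)%Z.
  have := fact2_PhiT_dvdn_prod_gcdn le_in; rewrite -[(_ %| _)%N]/(_%:Z %| _%:Z)%Z.
  move=> /dvdz_trans; apply; rewrite /Z zcontentsM PoszM.
  apply: dvdz_mul; first exact: prod_gcdn_dvdz_zcontents.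
  by have := prod_gcdn_dvdz_zcontents (n - i) n (- (dlcm n)%:Z); rewrite abszN.
rewrite dvdz_contents => /polyOverP/(_ H)/dvdzP[z Z_H]; exists z.
have fact2_neq0 : (n`!%:R ^+ 2 : rat) != 0 by rewrite expf_neq0 // pnatr_eq0 -lt0n fact_gt0.
apply: (mulIf fact2_neq0).
rewrite -coef_comp_scaleX R4_comp_scaleX // coefMC -mulrA mulVf // mulr1.
by rewrite coef_map_id0 // -/Z Z_H !intrM -pmulrn !natrM mulrA mulrAC expr2 mulrA.
Qed.

Theorem mainTheorem18 (n H i : nat) (hi : (i <= n)%N) :
  exists z : int,
    ((PhiT n)%:R)^-1 * ((dlcm n)%:R ^+ H) * ((H`!%:R)^-1 * ((R4 n i)^`(H)).[0])
    = z%:~R :> rat.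
Proof.
have [z dR4_H] := PhiT_dvd_dlcm_exp_coef_R4 n i H hi; exists z.
have Phi_neq0 : ((PhiT n)%:R : rat) != 0 by rewrite pnatr_eq0 -lt0n PhiT_gt0.
rewrite horner0_derivn -[(R4 n i)`_H *+ _]mulr_natr [_^-1 * (_ * _)]mulrCA.
rewrite mulVf ?mulr1 ?pnatr_eq0 -?lt0n ?fact_gt0 //.
by rewrite -mulrA dR4_H intrM mulrC -pmulrn mulfK.
Qed.
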